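(* Let $E$ be a finite-dimensional quantum system, $T$ a qubit register with computational basis $\{\ket{0},\ket{1}\}$, and for $a,b\in\{0,1\}$ let $\sigma_{E|ab}$ be density operators on $E$. For $a,b\in\{0,1\}$ define $$\rho_{ET|ab}=\tfrac12\,\sigma_{E|ab}\otimes\ket{0}\!\bra{0}_T+\tfrac12\,\sigma_{E|\overline a\,\overline b}\otimes\ket{1}\!\bra{1}_T,$$ where $\overline a=a\oplus 1$, $\overline b=b\oplus1$. Fix a block size $k\ge1$, let $\mathbf{ET}=E_1T_1\cdots E_kT_k$ denote $k$ copies of $ET$, and for a string $\mathbf m=(m_1,\dots,m_k)\in\{0,1\}^k$ with bitwise complement $\overline{\mathbf m}$ define $$\rho_{\mathbf{ET}|\mathbf{mm}}=\rho_{ET|m_1m_1}\otimes\cdots\otimes\rho_{ET|m_km_k},\qquad \rho_{\mathbf{ET}|\overline{\mathbf m}\,\overline{\mathbf m}}=\rho_{ET|\overline{m_1}\,\overline{m_1}}\otimes\cdots\otimes\rho_{ET|\overline{m_k}\,\overline{m_k}}.$$ Define the classical-quantum states on a classical bit register $C$ and $\mathbf{ET}$: $$\widetilde\rho_{C\mathbf{ET}}=\tfrac12\ket{0}\!\bra{0}_C\otimes\rho_{\mathbf{ET}|\mathbf{mm}}+\tfrac12\ket{1}\!\bra{1}_C\otimes\rho_{\mathbf{ET}|\overline{\mathbf m}\,\overline{\mathbf m}},\qquad \overline\rho_{C\mathbf{ET}}=\tfrac12\ket{0}\!\bra{0}_C\otimes\rho_{ET|00}^{\otimes k}+\tfrac12\ket{1}\!\bra{1}_C\otimes\rho_{ET|11}^{\otimes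 k}.$$ Then for every $\mathbf m\in\{0,1\}^k$, $H(C|\mathbf{ET})_{\widetilde\rho}=H(C|\mathbf{ET})_{\overline\rho}$.
   Context: $H(C|\mathbf{ET})_\rho=H(C\mathbf{ET})_\rho-H(\mathbf{ET})_\rho$ denotes the conditional von Neumann entropy of the state $\rho$. *)

From HB Require Import structures.
From mathcomp Require Import all_boot all_order all_algebra.
From mathcomp Require Import reals exp.
From mathcomp Require Import complex mxtens.

Set Implicit Arguments.
Unset Strict Implicit.
Unset Printing Implicit Defensive.

Import Order.TTheory GRing.Theory Num.Theory.
Local Open Scope ring_scope.

Section QDefs.
Variable R : realType.
Local Notation C := (R[i]).

Definition adjmx {m n} (A : 'M[C]_(m, n)) : 'M[C]_(n, m) := (map_mx Num.conj A)^T.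

Definition density {n} (A : 'M[C]_n) : Prop :=
  [/\ adjmx A = A,
      (forall v : 'cV[C]_n, 0 <= (adjmx v *m A *m v) 0 0)
    & \tr A = 1].

(** eigenvalues (with algebraic multiplicity) = roots of the characteristic
    polynomial, which splits over the algebraically closed field C *)
Definition spectrum {n} (A : 'M[C]_n) : seq C :=
  sval (closed_field_poly_normal (char_poly A)).

Definition xlog2x (x : R) : R := if x == 0 then 0 else x * (ln x / ln 2).

Definition vN_entropy {n} (A : 'M[C]_n) : R :=
  - \sum_(z <- spectrum A) xlog2x (complex.Re z).

(** partial trace over the first tensor factor of C^m (x) C^n *)
Definition ptrace1 {m n} (A : 'M[C]_(m * n)) : 'M[C]_n :=
  \sum_(i < m) \matrix_(j, l) A (mxtens_index (i, j)) (mxtens_index (i, l)).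

(** conditional entropy H(X|Y) = H(XY) - H(Y), X the first factor *)
Definition cond_entropy {m n} (A : 'M[C]_(m * n)) : R :=
  vN_entropy A - vN_entropy (ptrace1 A).

Definition proj0 : 'M[C]_2 := delta_mx 0 0.
Definition proj1 : 'M[C]_2 := delta_mx 1 1.

Definition rhoET {d} (sigma : bool -> bool -> 'M[C]_d) (a b : bool)
  : 'M[C]_(d * 2) :=
  (2%:R^-1) *: tensmx (sigma a b) proj0
  + (2%:R^-1) *: tensmx (sigma (~~ a) (~~ b)) proj1.

Fixpoint pw (n k : nat) : nat := if k is k'.+1 then n * pw n k' else 1%N.

Fixpoint ktens {n} (k : nat) (F : nat -> 'M[C]_n) : 'M[C]_(pw n k) :=
  match k return 'M[C]_(pw n k) with
  | 0 => 1%:M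
  | k'.+1 => tensmx (F 0%N) (ktens k' (fun i => F i.+1))
  end.

Definition cq_state {n} (r0 r1 : 'M[C]_n) : 'M[C]_(2 * n) :=
  (2%:R^-1) *: tensmx proj0 r0 + (2%:R^-1) *: tensmx proj1 r1.

Definition rho_tilde {d k} (sigma : bool -> bool -> 'M[C]_d)
  (m : k.-tuple bool) : 'M[C]_(2 * pw (d * 2) k) :=
  cq_state
    (ktens k (fun i => rhoET sigma (nth false m i) (nth false m i)))
    (ktens k (fun i => rhoET sigma (~~ nth false m i) (~~ nth false m i))).

Definition rho_bar {d} (k : nat) (sigma : bool -> bool -> 'M[C]_d)
  : 'M[C]_(2 * pw (d * 2) k) :=
  cq_state (ktens k (fun _ => rhoET sigma false false))
           (ktens k (fun _ => rhoET sigma true true)).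

End QDefs.

(* Let X be the bit flip on T. Conjugating rho_{ET|ab} by X on T swaps its
   two branches, giving rho_{ET|~a~b}; so for U the product of X^{m_i} on the
   registers T_i, tilde rho = (1_C (x) U) bar rho (1_C (x) U). Conjugation by
   an involution preserves the characteristic polynomial, hence the spectrum
   and the entropy; and since U acts on ET only, it commutes with the partial
   trace over C, so both terms of H(C|ET) are unchanged. *)

From HB Require Import structures.
From mathcomp Require Import all_boot all_order all_algebra.
From mathcomp Require Import reals exp.
From mathcomp Require Import complex mxtens.

Set Implicit Arguments.
Unset Strict Implicit.
Unset Printing Implicit Defensive.
Import Order.TTheory GRing.Theory Num.Theory.
Local Open Scope ring_scope.

Lemma char_poly_conj (F : comNzRingType) n (W V A : 'M[F]_n) :
  W *m V = 1%:M -> char_poly (W *m A *m V) = char_poly A.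
Proof.
move=> WV; pose Wp := map_mx polyC W; pose Vp := map_mx polyC V.
have WpVp : Wp *m Vp = 1%:M by rewrite -map_mxM WV map_mx1.
rewrite /char_poly.
have -> : char_poly_mx (W *m A *m V) = Wp *m char_poly_mx A *m Vp.
  rewrite /char_poly_mx !map_mxM mulmxBr mulmxBl -/Wp -/Vp.
  by rewrite scalar_mxC -[_%:M *m Wp *m Vp]mulmxA WpVp mulmx1.
by rewrite !det_mulmx mulrAC -det_mulmx WpVp det1 mul1r.
Qed.

Lemma tensmx11 (F : pzRingType) m n :
  (1%:M : 'M[F]_m) *t (1%:M : 'M[F]_n) = 1%:M.
Proof.
apply/matrixP=> i j.
case: (mxtens_indexP i)=> i0 i1; case: (mxtens_indexP j)=> j0 j1.
rewrite tensmxE !mxE (can_eq (@mxtens_indexK _ _)) xpair_eqE.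
by case: (i0 == j0); case: (i1 == j1); rewrite ?mulr1 ?mulr0.
Qed.

Lemma sum_mxtens_index (V : nmodType) m n (F : 'I_(m * n) -> V) :
  \sum_(k < m * n) F k = \sum_(i < m) \sum_(j < n) F (mxtens_index (i, j)).
Proof.
rewrite pair_big (reindex (@mxtens_index m n)) /=; first by apply: eq_bigr => -[].
by exists (@mxtens_unindex m n) => k _; rewrite (mxtens_indexK, mxtens_unindexK).
Qed.

Section Qubits.
Variable R : realType.
Local Notation C := (R[i]).

Lemma ptrace1_tens1_mulmx m n (U : 'M[C]_n) (A : 'M[C]_(m * n)) :
  ptrace1 ((1%:M *t U) *m A) = U *m ptrace1 A.
Proof.
rewrite /ptrace1 mulmx_sumr; apply: eq_bigr => i _; apply/matrixP => j l.
rewrite !mxE sum_mxtens_index (bigD1 i) //= [X in _ + X]big1 ?addr0 => [|a ne].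
  by apply: eq_bigr => b _; rewrite tensmxE !mxE eqxx mul1r.
by apply: big1 => b _; rewrite tensmxE mxE eq_sym (negbTE ne) mul0r mul0r.
Qed.

Lemma ptrace1_mulmx_tens1 m n (V : 'M[C]_n) (A : 'M[C]_(m * n)) :
  ptrace1 (A *m (1%:M *t V)) = ptrace1 A *m V.
Proof.
rewrite /ptrace1 mulmx_suml; apply: eq_bigr => i _; apply/matrixP => j l.
rewrite !mxE sum_mxtens_index (bigD1 i) //= [X in _ + X]big1 ?addr0 => [|a ne].
  by apply: eq_bigr => b _; rewrite tensmxE !mxE eqxx mul1r.
by apply: big1 => b _; rewrite tensmxE mxE (negbTE ne) mul0r mulr0.
Qed.

Lemma vN_entropy_conj n (W V A : 'M[C]_n) :
  W *m V = 1%:M -> vN_entropy (W *m A *m V) = vN_entropy A.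
Proof. by move=> WV; rewrite /vN_entropy /spectrum char_poly_conj. Qed.

Lemma cond_entropy_conj_tens1 m n (U V : 'M[C]_n) (A : 'M[C]_(m * n)) :
  U *m V = 1%:M ->
  cond_entropy ((1%:M *t U) *m A *m (1%:M *t V)) = cond_entropy A.
Proof.
move=> UV; have UVt : (1%:M *t U) *m (1%:M *t V) = 1%:M :> 'M[C]_(m * n).
  by rewrite tensmx_mul mul1mx UV tensmx11.
rewrite /cond_entropy ptrace1_mulmx_tens1 ptrace1_tens1_mulmx.
by rewrite !vN_entropy_conj.
Qed.

Lemma eq_ktens n k (F G : nat -> 'M[C]_n) : F =1 G -> ktens k F = ktens k G.
Proof.
by elim: k F G => [//|k IHk] F G FG /=; rewrite FG (IHk _ (G \o succn)).
Qed.

Lemma ktensM n k (F G : nat -> 'M[C]_n) :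
  ktens k (fun i => F i *m G i) = ktens k F *m ktens k G.
Proof. by elim: k F G => [|k IHk] F G /=; rewrite ?mul1mx // tensmx_mul -IHk. Qed.

Lemma ktens1 n k : ktens k (fun=> 1%:M : 'M[C]_n) = 1%:M.
Proof. by elim: k => [//|k IHk] /=; rewrite IHk tensmx11. Qed.

Definition pauliX : 'M[C]_2 := \matrix_(i, j) (i != j)%:R.

Lemma pauliX_involutive : pauliX *m pauliX = 1%:M.
Proof.
apply/matrixP => i j; rewrite !(mxE, big_ord_recl, big_ord0).
by case: i j => [[|[|//]] ?] [[|[|//]] ?];
  rewrite /= ?(mulr0, mulr1, addr0, add0r).
Qed.

Lemma pauliX_proj0 : pauliX *m proj0 R *m pauliX = proj1 R.
Proof.
apply/matrixP => i j; rewrite !(mxE, big_ord_recl, big_ord0).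
by case: i j => [[|[|//]] ?] [[|[|//]] ?];
  rewrite /= ?(mulr0, mulr1, mul0r, addr0, add0r).
Qed.

Lemma pauliX_proj1 : pauliX *m proj1 R *m pauliX = proj0 R.
Proof.
rewrite -pauliX_proj0 !mulmxA pauliX_involutive mul1mx.
by rewrite -mulmxA pauliX_involutive mulmx1.
Qed.

Definition flipT d (b : bool) : 'M[C]_(d * 2) :=
  1%:M *t (if b then pauliX else 1%:M).

Lemma flipT_involutive d b : flipT d b *m flipT d b = 1%:M.
Proof.
by rewrite tensmx_mul mul1mx; case: b; rewrite ?pauliX_involutive ?mul1mx tensmx11.
Qed.

Lemma rhoET_flipT d (sigma : bool -> bool -> 'M[C]_d) b a c :
  flipT d b *m rhoET sigma a c *m flipT d b = rhoET sigma (b (+) a) (b (+) c).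
Proof.
case: b; last by rewrite /flipT tensmx11 mul1mx mulmx1.
rewrite /rhoET /flipT mulmxDr mulmxDl -!scalemxAr -!scalemxAl !tensmx_mul.
rewrite !mul1mx !mulmx1.
by rewrite pauliX_proj0 pauliX_proj1 !negbK addrC.
Qed.

Lemma cq_state_conj n (U V r0 r1 : 'M[C]_n) :
  cq_state (U *m r0 *m V) (U *m r1 *m V) =
  (1%:M *t U) *m cq_state r0 r1 *m (1%:M *t V).
Proof.
rewrite /cq_state mulmxDr mulmxDl -!scalemxAr -!scalemxAl !tensmx_mul.
by rewrite !mul1mx !mulmx1.
Qed.

End Qubits.

Theorem lemma1 (R : realType) (d k : nat)
  (sigma : bool -> bool -> 'M[R[i]]_d)
  (hsigma : forall a b : bool, density (sigma a b))
  (hk : (0 < k)%N) (m : k.-tuple bool) :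
  cond_entropy (rho_tilde sigma m) = cond_entropy (rho_bar k sigma).
Proof.
pose U := ktens k (fun i => flipT R d (nth false m i)).
have UU : U *m U = 1%:M.
  by rewrite -ktensM (eq_ktens _ (fun i => flipT_involutive _ _ _)) ktens1.
suff -> : rho_tilde sigma m = (1%:M *t U) *m rho_bar k sigma *m (1%:M *t U).
  exact: cond_entropy_conj_tens1.
rewrite /rho_bar -cq_state_conj -!ktensM.
by congr cq_state; apply: eq_ktens => i; rewrite rhoET_flipT ?addbF ?addbT.
Qed.
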